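(* Let $a>0$ and $0\le r_0<a$, and consider, in polar coordinates $(r,\theta)$ about a pole $O$, the circle of radius $a$ whose centre $C$ has polar coordinates $(r_0,\theta_0)$. Thus $O$ lies strictly inside the circle, and for each direction $\theta$ the ray from $O$ in direction $\theta$ meets the circle at distance $$r(\theta)=r_0\cos(\theta-\theta_0)+\sqrt{a^2-r_0^2\sin^2(\theta-\theta_0)}$$ from $O$. Let $\theta_1<\theta_2<\theta_3<\theta_4<\theta_1+\pi$ and set $\theta_{i+4}=\theta_i+\pi$ for $i=1,2,3,4$ and $\theta_9=\theta_1+2\pi$. The four lines through $O$ in the directions $\theta_1,\theta_2,\theta_3,\theta_4$ divide the disc into eight sectors; for $1\le i\le 8$ let $$S_i=\frac12\int_{\theta_i}^{\theta_{i+1}} r(\theta)^2\,d\theta$$ be the area of the sector $\{O+\rho(\cos\theta,\sin\theta):\ \theta_i\le\theta\le\theta_{i+1},\ 0\le\rho\le r(\theta)\}$. Then $$S_1+S_3+S_5+S_7=S_2+S_4+S_6+S_8$$ if and only if $$\frac{r_0^2}{2}\Big[\sin 2(\theta_2-\theta_0)-\sin 2(\theta_1-\theta_0)+\sin 2(\theta_4-\theta_0)-\sin 2(\theta_3-\theta_0)\Big]+a^2\Big(\theta_2-\theta_1+\theta_4-\theta_3-\frac{\pi}{2}\Big)=0 .$$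
   Context: Polar coordinates are taken about the pole $O$; the point with polar coordinates $(r,\theta)$ is $O+r(\cos\theta,\sin\theta)$. The alternative sector sums are the sums of the areas of the odd-indexed sectors and of the even-indexed sectors, respectively. *)

From Stdlib Require Import Reals.
From Coquelicot Require Import Coquelicot.
Open Scope R_scope.

Definition rad (a r0 t0 t : R) : R :=
  r0 * cos (t - t0) + sqrt (a ^ 2 - r0 ^ 2 * (sin (t - t0)) ^ 2).

Definition sector_area (a r0 t0 u v : R) : R :=
  / 2 * RInt (fun t => (rad a r0 t0 t) ^ 2) u v.

(* Since r(theta + PI) = - r0 cos(theta - theta0) + sqrt(...), the cross terms
   cancel in r(theta)^2 + r(theta + PI)^2 = 2 a^2 + 2 r0^2 cos 2(theta - theta0).
   Hence each pair of opposite sectors is S_i + S_(i+4) = G(theta_(i+1)) - G(theta_i)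
   with G(theta) = a^2 theta + r0^2/2 sin 2(theta - theta0), and the two
   alternating sums differ by 2 (G theta_2 - G theta_1 + G theta_4 - G theta_3)
   - a^2 PI. *)
From Stdlib Require Import Reals Lra.
From Coquelicot Require Import Coquelicot.
Open Scope R_scope.

Definition paired_sector_primitive (a r0 t0 t : R) : R :=
  a ^ 2 * t + r0 ^ 2 / 2 * sin (2 * (t - t0)).

Lemma paired_sector_primitive_add_PI (a r0 t0 t : R) :
  paired_sector_primitive a r0 t0 (t + PI)
  = paired_sector_primitive a r0 t0 t + a ^ 2 * PI.
Proof.
  unfold paired_sector_primitive.
  replace (2 * (t + PI - t0)) with (2 * (t - t0) + 2 * PI) by ring.
  rewrite sin_plus, sin_2PI, cos_2PI.
  ring.
Qed.

Lemma is_RInt_comp_add_const (f : R -> R) (u v c : R) :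
  ex_RInt f (u + c) (v + c) ->
  is_RInt (fun t => f (t + c)) u v (RInt f (u + c) (v + c)).
Proof.
  intros hex.
  assert (hlin := is_RInt_comp_lin f 1 c u v (RInt f (u + c) (v + c))).
  rewrite !Rmult_1_l in hlin.
  refine (is_RInt_ext _ _ u v _ _ (hlin (RInt_correct _ _ _ hex))).
  intros t _. rewrite (scal_one (V := R_NormedModule)), Rmult_1_l. reflexivity.
Qed.

Section OppositeSectors.

Variables a r0 t0 : R.
Hypothesis hr0a : r0 ^ 2 < a ^ 2.

Let rad_sqr (t : R) : R := rad a r0 t0 t ^ 2.

Lemma radicand_pos (x : R) : 0 < a ^ 2 - r0 ^ 2 * sin x ^ 2.
Proof.
  assert (hsin := SIN_bound x).
  assert (hsin2 : 0 <= sin x ^ 2 <= 1) by (split; nra).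
  nra.
Qed.

Lemma rad_sqr_add_antipodal (t : R) :
  rad_sqr t + rad_sqr (t + PI) = 2 * (a ^ 2 + r0 ^ 2 * cos (2 * (t - t0))).
Proof.
  unfold rad_sqr, rad.
  replace (t + PI - t0) with (t - t0 + PI) by ring.
  rewrite neg_sin, neg_cos, cos_2a_sin.
  replace ((- sin (t - t0)) ^ 2) with (sin (t - t0) ^ 2) by ring.
  assert (hsqrt := sqrt_sqrt _ (Rlt_le _ _ (radicand_pos (t - t0)))).
  assert (hpyth := sin2_cos2 (t - t0)).
  unfold Rsqr in hpyth.
  nra.
Qed.

Lemma continuous_rad_sqr (t : R) : continuous rad_sqr t.
Proof.
  apply (@ex_derive_continuous R_AbsRing R_NormedModule).
  unfold rad_sqr, rad.
  auto_derive.
  apply radicand_pos.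
Qed.

Lemma RInt_rad_sqr_add_antipodal (u v : R) :
  RInt rad_sqr u v + RInt rad_sqr (u + PI) (v + PI)
  = 2 * (paired_sector_primitive a r0 t0 v - paired_sector_primitive a r0 t0 u).
Proof.
  set (pair_sum := fun t => 2 * (a ^ 2 + r0 ^ 2 * cos (2 * (t - t0)))).
  assert (hex : forall p q, ex_RInt rad_sqr p q).
  { intros p q.
    apply (@ex_RInt_continuous R_CompleteNormedModule).
    intros; apply continuous_rad_sqr. }
  assert (hshift := is_RInt_comp_add_const rad_sqr u v PI (hex _ _)).
  assert (hsum : is_RInt pair_sum u v
                   (RInt rad_sqr u v + RInt rad_sqr (u + PI) (v + PI))).
  { refine (is_RInt_ext _ _ u v _ _
              (is_RInt_plus _ _ u v _ _ (RInt_correct _ _ _ (hex u v)) hshift)).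
    intros t _. apply rad_sqr_add_antipodal. }
  assert (hftc : is_RInt pair_sum u v
                   (2 * paired_sector_primitive a r0 t0 v
                    - 2 * paired_sector_primitive a r0 t0 u)).
  { refine (is_RInt_derive (fun t => 2 * paired_sector_primitive a r0 t0 t) pair_sum u v _ _).
    - intros t _. unfold pair_sum, paired_sector_primitive.
      auto_derive; [exact I | unfold Rminus; field].
    - intros t _. apply (@ex_derive_continuous R_AbsRing R_NormedModule).
      unfold pair_sum. auto_derive. exact I. }
  rewrite <- (is_RInt_unique _ _ _ _ hsum), (is_RInt_unique _ _ _ _ hftc).
  ring.
Qed.

Lemma sector_area_add_antipodal (u v : R) :
  sector_area a r0 t0 u v + sector_area a r0 t0 (u + PI) (v + PI)
  = paired_sector_primitive a r0 t0 v - paired_sector_primitive a r0 t0 u.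
Proof.
  unfold sector_area.
  rewrite <- Rmult_plus_distr_l.
  change (fun t => rad a r0 t0 t ^ 2) with rad_sqr.
  rewrite RInt_rad_sqr_add_antipodal.
  field.
Qed.

End OppositeSectors.

Theorem mainTheorem1 (a r0 t0 t1 t2 t3 t4 : R)
  (ha : 0 < a) (hr0 : 0 <= r0) (hr0a : r0 < a)
  (h12 : t1 < t2) (h23 : t2 < t3) (h34 : t3 < t4) (h41 : t4 < t1 + PI) :
  let t5 := t1 + PI in
  let t6 := t2 + PI in
  let t7 := t3 + PI in
  let t8 := t4 + PI in
  let t9 := t1 + 2 * PI in
  let S := sector_area a r0 t0 in
  (S t1 t2 + S t3 t4 + S t5 t6 + S t7 t8 = S t2 t3 + S t4 t5 + S t6 t7 + S t8 t9)
  <->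
  (r0 ^ 2 / 2 * (sin (2 * (t2 - t0)) - sin (2 * (t1 - t0))
                 + sin (2 * (t4 - t0)) - sin (2 * (t3 - t0)))
   + a ^ 2 * (t2 - t1 + t4 - t3 - PI / 2) = 0).
Proof.
  cbv zeta.
  assert (hsq : r0 ^ 2 < a ^ 2) by nra.
  pose proof (sector_area_add_antipodal a r0 t0 hsq t1 t2) as S12.
  pose proof (sector_area_add_antipodal a r0 t0 hsq t2 t3) as S23.
  pose proof (sector_area_add_antipodal a r0 t0 hsq t3 t4) as S34.
  pose proof (sector_area_add_antipodal a r0 t0 hsq t4 (t1 + PI)) as S41.
  replace (t1 + 2 * PI) with (t1 + PI + PI) by ring.
  rewrite paired_sector_primitive_add_PI in S41.
  unfold paired_sector_primitive in S12, S23, S34, S41.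
  split; intro; lra.
Qed.
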